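(* Let $\nu>0$ and let $U(x,t)=\sum_{i=0}^\infty\sum_{k=0}^\infty U_{i,k}x^it^k$ be a given formal power series. For every choice of complex numbers $A_{i,1,k}$ ($i,k\ge 0$) there exist unique formal power series \[u=\sum_{i\ge0}\sum_{j\ge1}\sum_{k\ge0}A_{i,j,k}x^iy^jt^k,\qquad v=\sum_{i\ge0}\sum_{j\ge1}\sum_{k\ge0}B_{i,j,k}x^iy^jt^k\] (so that $u=v=0$ at $y=0$) with the prescribed coefficients $A_{i,1,k}$, satisfying, as identities of formal power series in $x,y,t$, Prandtl's boundary layer equations \[ u\frac{\partial u}{\partial x}+v\frac{\partial u}{\partial y}+\frac{\partial u}{\partial t}=\frac{\partial U}{\partial t}+U\frac{\partial U}{\partial x}+\nu\frac{\partial^2u}{\partial y^2},\qquad \frac{\partial u}{\partial x}+\frac{\partial v}{\partial y}=0 . \] Moreover, for all $i,k\ge0$: $B_{i,1,k}=0$; \[A_{i,2,k}=-\frac{1}{2\nu}\Big(U_{i,k+1}(k+1)+\sum_{p=0}^{i}\sum_{q=0}^{k}(i-p+1)U_{p,q}U_{i-p+1,k-q}\Big);\qquad A_{i,3,k}=\frac{(k+1)A_{i,1,k+1}}{6\nu};\] $B_{i,j,k}=-\frac{i+1}{j}A_{i+1,j-1,k}$ for $j\ge2$; and for $j\ge4$, \[ A_{i,j,k}=\frac{1}{\nu j(j-1)}\Big(A_{i,j-2,k+1}(k+1)+\sum_{p=0}^{i}\sum_{q=1}^{j-3}\sum_{r=0}^{k}(i-p+1)A_{p,q,r}A_{i-p+1,j-2-q,k-r}-\sum_{p=0}^{i}\sum_{q=2}^{j-2}\sum_{r=0}^{k}\frac{(p+1)(j-1-q)}{q}A_{p+1,q-1,r}A_{i-p,j-1-q,k-r}\Big).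 \]
   Context: Here $u,v$ are the velocity components in a two-dimensional boundary layer along a wall $y=0$, $U(x,t)$ is the external (outer) flow velocity, and the pressure gradient has been eliminated using $-\frac1\rho\frac{\partial P}{\partial x}=\frac{\partial U}{\partial t}+U\frac{\partial U}{\partial x}$. In the paper, the free coefficients $A_{i,1,k}$ are intended to be fixed by matching $u$ to the external flow $U$ away from the wall. *)

From mathcomp Require Import all_boot all_algebra complex.
From mathcomp Require Import Rstruct.
Set Implicit Arguments. Unset Strict Implicit. Unset Printing Implicit Defensive.
Import GRing.Theory Num.Theory.
Local Open Scope ring_scope.
Local Open Scope complex_scope.

Notation Real := Rdefinitions.R.
Definition Cplx : numClosedFieldType := (Rdefinitions.R)[i].

(* A formal power series in x, y, t with complex coefficients, represented by
   its coefficient array: f i j k is the coefficient of x^i y^j t^k. *)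
Definition fps3 := nat -> nat -> nat -> Cplx.
(* A formal power series in x, t: g i k is the coefficient of x^i t^k. *)
Definition fps2 := nat -> nat -> Cplx.

Definition lift_xt (g : fps2) : fps3 :=
  fun i j k => if j == 0%N then g i k else 0.

Definition dx (f : fps3) : fps3 := fun i j k => (i.+1)%:R * f i.+1 j k.
Definition dy (f : fps3) : fps3 := fun i j k => (j.+1)%:R * f i j.+1 k.
Definition dt (f : fps3) : fps3 := fun i j k => (k.+1)%:R * f i j k.+1.

Definition fmul (f g : fps3) : fps3 := fun i j k =>
  \sum_(a < i.+1) \sum_(b < j.+1) \sum_(c < k.+1)
     f a b c * g (i - a)%N (j - b)%N (k - c)%N.

Definition fadd (f g : fps3) : fps3 := fun i j k => f i j k + g i j k.
Definition fscale (c : Cplx) (f : fps3) : fps3 := fun i j k => c * f i j k.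

Definition prandtl (nu : Real) (U : fps2) (u v : fps3) : Prop :=
  let UU := lift_xt U in
  (forall i j k,
     fadd (fadd (fmul u (dx u)) (fmul v (dy u))) (dt u) i j k
     = fadd (fadd (dt UU) (fmul UU (dx UU))) (fscale (nu%:C) (dy (dy u))) i j k)
  /\ (forall i j k, fadd (dx u) (dy v) i j k = 0).

Definition admissible (nu : Real) (U : fps2) (A1 : fps2) (u v : fps3) : Prop :=
  (forall i k, u i 0%N k = 0 /\ v i 0%N k = 0)
  /\ (forall i k, u i 1%N k = A1 i k)
  /\ prandtl nu U u v.

(* Every equation at a given power of y determines one new coefficient of u.
   Continuity forces v = -(int_0^y u_x), i.e. B_{i,j,k} = -(i+1)/j A_{i+1,j-1,k}.
   With v eliminated, the momentum equation at y^0 reads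
   0 = U_t + U U_x + 2 nu A_{.,2,.}, and at y^(j-2), j >= 3, it reads
   (convection built from A_{.,q,.}, q < j) = nu j (j-1) A_{.,j,.}.
   Since nu j (j-1) != 0, the coefficients A_{.,j,.} are obtained by strong
   recursion on j from the prescribed A_{.,1,.}, and any solution must
   satisfy the same recursion, hence coincides with this one. *)
From mathcomp Require Import all_boot all_algebra complex.
From mathcomp Require Import Rstruct.
From mathcomp Require Import ring zify.
From Stdlib Require Import FunctionalExtensionality.
Import GRing.Theory Num.Theory.
Local Open Scope ring_scope.
Local Open Scope complex_scope.

Section CausalRecursion.
Variables (T : Type) (t0 : T) (F : (nat -> nat -> nat -> T) -> nat -> nat -> nat -> T).
Hypothesis F_causal : forall f g i j k,
  (forall i' j' k', (j' < j)%N -> f i' j' k' = g i' j' k') -> F f i j k = F g i j k.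

Fixpoint picard n : nat -> nat -> nat -> T :=
  if n is n'.+1 then F (picard n') else fun _ _ _ => t0.

Lemma picard_stable i j k n m :
  (j < n)%N -> (j < m)%N -> picard n i j k = picard m i j k.
Proof.
elim/ltn_ind: j i k n m => j IH i k [|n] [|m] //= jn jm.
by apply: F_causal => i' j' k' j'j; apply: IH => //; lia.
Qed.

Definition causal_fix : nat -> nat -> nat -> T := fun i j k => picard j.+1 i j k.

Lemma causal_fixE i j k : causal_fix i j k = F causal_fix i j k.
Proof.
by apply: F_causal => i' j' k' j'j; apply: picard_stable => //; lia.
Qed.

Lemma causal_fix_unique f :
  (forall i j k, f i j k = F f i j k) -> f = causal_fix.
Proof.
move=> fE; apply: functional_extensionality => i.
apply: functional_extensionality => j; apply: functional_extensionality => k.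
elim/ltn_ind: j i k => j IH i k.
by rewrite fE causal_fixE; apply: F_causal => i' j' k' /IH.
Qed.

End CausalRecursion.

Definition convection (u v : fps3) : fps3 :=
  fadd (fadd (fmul u (dx u)) (fmul v (dy u))) (dt u).

Definition forcing (nu : Real) (U : fps2) (u : fps3) : fps3 :=
  let UU := lift_xt U in
  fadd (fadd (dt UU) (fmul UU (dx UU))) (fscale (nu%:C) (dy (dy u))).

Definition transverse_velocity (u : fps3) : fps3 := fun i j k =>
  if (j <= 1)%N then 0 else - ((i.+1)%:R / j%:R) * u i.+1 (j - 1)%N k.

Definition pressure_gradient (U : fps2) i k : Cplx :=
  U i k.+1 * (k.+1)%:R
  + \sum_(p < i.+1) \sum_(q < k.+1)
      (i - p + 1)%N%:R * U p q * U (i - p + 1)%N (k - q)%N.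

(* The coefficient of y^(j-2) in u u_x + v u_y + u_t once v is eliminated. *)
Definition reduced_convection (u : fps3) i j k : Cplx :=
  u i (j - 2)%N k.+1 * (k.+1)%:R
  + \sum_(p < i.+1) \sum_(1 <= q < j - 2) \sum_(r < k.+1)
      (i - p + 1)%N%:R * u p q r * u (i - p + 1)%N (j - 2 - q)%N (k - r)%N
  - \sum_(p < i.+1) \sum_(2 <= q < j - 1) \sum_(r < k.+1)
      ((p.+1)%:R * (j - 1 - q)%N%:R / q%:R)
        * u p.+1 (q - 1)%N r * u (i - p)%N (j - 1 - q)%N (k - r)%N.

Definition coef_rule (nu : Real) (U A1 : fps2) (u : fps3) i j k : Cplx :=
  match j with
  | 0 => 0
  | 1 => A1 i k
  | 2 => - (2%:R * nu%:C)^-1 * pressure_gradient U i k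
  | _.+3 => (nu%:C * j%:R * (j - 1)%N%:R)^-1 * reduced_convection u i j k
  end.

Lemma coef_rule_causal nu U A1 u w i j k :
  (forall i' j' k', (j' < j)%N -> u i' j' k' = w i' j' k') ->
  coef_rule nu U A1 u i j k = coef_rule nu U A1 w i j k.
Proof.
case: j => [|[|[|n]]] uw //=; rewrite /reduced_convection.
congr (_ * (_ + _ - _)); first by rewrite uw //; lia.
all: apply: eq_bigr => p _; apply: eq_big_nat => q /andP[q1 q2].
all: by apply: eq_bigr => r _; rewrite !uw //; lia.
Qed.

Lemma fmul_dx_succ (u : fps3) i n k : (forall i k, u i 0%N k = 0) ->
  fmul u (dx u) i n.+1 k =
  \sum_(p < i.+1) \sum_(1 <= q < n.+1) \sum_(r < k.+1)
      (i - p + 1)%N%:R * u p q r * u (i - p + 1)%N (n.+1 - q)%N (k - r)%N.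
Proof.
move=> u0; apply: eq_bigr => a _.
rewrite big_ord_recl big1 ?add0r; last by move=> c _; rewrite u0 mul0r.
rewrite big_ord_recr /= [X in _ + X = _]big1 ?addr0; last first.
  by move=> c _; rewrite /dx /bump /= add1n subnn u0 !mulr0.
rewrite big_add1 big_mkord /=; apply: eq_bigr => b _; apply: eq_bigr => c _.
rewrite /dx /bump /= add1n addn1; ring.
Qed.

Lemma fmul_transverse_dy_succ (u : fps3) i n k :
  fmul (transverse_velocity u) (dy u) i n.+1 k =
  - \sum_(p < i.+1) \sum_(2 <= q < n.+2) \sum_(r < k.+1)
      ((p.+1)%:R * (n.+2 - q)%N%:R / q%:R)
        * u p.+1 (q - 1)%N r * u (i - p)%N (n.+2 - q)%N (k - r)%N.
Proof.
rewrite /fmul -sumrN; apply: eq_bigr => a _.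
rewrite big_ord_recl big1 ?add0r; last by move=> c _; rewrite mul0r.
rewrite big_ord_recl big1 ?add0r; last by move=> c _; rewrite mul0r.
rewrite big_add1 big_add1 big_mkord /= -sumrN; apply: eq_bigr => b _.
rewrite -sumrN; apply: eq_bigr => c _.
rewrite /transverse_velocity /dy /bump /= !add1n subn1.
have -> : ((n.+1 - b.+2).+1 = n.+2 - b.+2)%N by have := ltn_ord b; lia.
ring.
Qed.

Lemma convection0 (u : fps3) i k : (forall i k, u i 0%N k = 0) ->
  convection u (transverse_velocity u) i 0 k = 0.
Proof.
move=> u0; rewrite /convection /fadd /fmul /dt u0 mulr0 addr0.
rewrite !big1 ?addr0 // => a _; rewrite big_ord1 big1 // => c _.
  by rewrite /transverse_velocity mul0r.
by rewrite u0 mul0r.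
Qed.

Lemma convection_succ (u : fps3) i n k : (forall i k, u i 0%N k = 0) ->
  convection u (transverse_velocity u) i n.+1 k = reduced_convection u i n.+3 k.
Proof.
move=> u0; rewrite /convection /fadd fmul_dx_succ // fmul_transverse_dy_succ.
rewrite /reduced_convection /dt.
have -> : (n.+3 - 2 = n.+1)%N by lia.
have -> : (n.+3 - 1 = n.+2)%N by lia.
ring.
Qed.

Lemma forcing0 nu U (u : fps3) i k :
  forcing nu U u i 0 k = pressure_gradient U i k + nu%:C * 2%:R * u i 2 k.
Proof.
rewrite /forcing /fadd /fscale /dt /dy /fmul /pressure_gradient /lift_xt /=.
congr (_ + _ + _); first by rewrite mulrC.
  apply: eq_bigr => a _; rewrite big_ord1 /=; apply: eq_bigr => c _.
  by rewrite /dx /= addn1; ring.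
ring.
Qed.

Lemma forcing_succ nu U (u : fps3) i n k :
  forcing nu U u i n.+1 k = nu%:C * (n.+3%:R * n.+2%:R) * u i n.+3 k.
Proof.
rewrite /forcing /fadd /fscale /dt /dy /fmul /lift_xt /= mulr0 add0r big1 ?add0r.
  by ring.
move=> a _; apply: big1 => b _; apply: big1 => c _.
by case: eqP => [->|_]; rewrite ?mul0r // /dx /= !mulr0.
Qed.

Lemma continuity_transverse (u : fps3) i j k : (forall i k, u i 0%N k = 0) ->
  fadd (dx u) (dy (transverse_velocity u)) i j k = 0.
Proof.
move=> u0; rewrite /fadd /dx /dy /transverse_velocity /=.
case: j => [|j] /=; first by rewrite u0 !mulr0 addr0.
rewrite subn1 /=; field; rewrite -?natrD ?pnatr_eq0 //.
Qed.

Lemma continuity_transverseE (u v : fps3) :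
  (forall i k, v i 0%N k = 0) ->
  (forall i j k, fadd (dx u) (dy v) i j k = 0) -> (forall i k, u i 0%N k = 0) ->
  v = transverse_velocity u.
Proof.
move=> v0 cont u0; apply: functional_extensionality => i.
apply: functional_extensionality => j; apply: functional_extensionality => k.
move: (cont i j.-1 k); rewrite /fadd /dx /dy /transverse_velocity.
case: j => [|[|j]] /=; first by rewrite v0.
  by rewrite u0 mulr0 add0r mul1r.
rewrite subn1 /= => /eqP; rewrite addrC addr_eq0 => /eqP vE.
have jn0 : j.+2%:R != 0 :> Cplx by rewrite pnatr_eq0.
by rewrite -[v i j.+2 k](mulKf jn0) vE; ring.
Qed.

Lemma nuC_neq0 (nu : Real) : 0 < nu -> nu%:C != 0 :> Cplx.
Proof. by move=> nu_gt0; apply: lt0r_neq0; rewrite ltcR. Qed.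

Section Admissible.
Variables (nu : Real) (U A1 : fps2).
Hypothesis nu_gt0 : 0 < nu.

Lemma admissibleP (u v : fps3) :
  admissible nu U A1 u v <->
  v = transverse_velocity u /\ forall i j k, u i j k = coef_rule nu U A1 u i j k.
Proof.
have nu0 := nuC_neq0 nu nu_gt0.
split.
  move=> [uv0 [u1 [mom cont]]].
  have u0 i k : u i 0%N k = 0 by case: (uv0 i k).
  have vE := @continuity_transverseE u v (fun i k => proj2 (uv0 i k)) cont u0.
  split => // i [|[|[|n]]] k //=.
  - have := mom i 0%N k; rewrite -/(convection u v) -/(forcing nu U u) vE.
    rewrite convection0 // forcing0 => /eqP; rewrite eq_sym addr_eq0 => /eqP uE.
    have c0 : nu%:C * 2%:R != 0 :> Cplx by rewrite mulf_neq0 ?pnatr_eq0.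
    by rewrite -[u i 2%N k](mulKf c0) uE; field.
  - have := mom i n.+1 k; rewrite -/(convection u v) -/(forcing nu U u) vE.
    rewrite convection_succ // forcing_succ => ->.
    by rewrite [(n.+3 - 1)%N]/= mulrA mulKf // !mulf_neq0 // pnatr_eq0.
move=> [-> uE]; have u0 i k : u i 0%N k = 0 by rewrite uE.
split=> //; split; first by move=> i k; rewrite uE.
split; last by move=> i j k; apply: continuity_transverse.
move=> i [|n] k; rewrite -/(convection u _) -/(forcing nu U u).
  rewrite convection0 // forcing0 uE /=; field.
  by rewrite nu0 -?natrD ?pnatr_eq0.
rewrite convection_succ // forcing_succ [u i n.+3 k]uE /= subn1 /=; field.
by rewrite nu0 -?natrD ?pnatr_eq0.
Qed.

End Admissible.

Theorem mainTheorem2 (nu : Real) (hnu : 0 < nu) (U : fps2) (A1 : fps2) :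
  exists (A B : fps3),
    admissible nu U A1 A B
    /\ (forall A' B' : fps3, admissible nu U A1 A' B' -> A' = A /\ B' = B)
    /\ (forall i k, B i 1%N k = 0)
    /\ (forall i k,
          A i 2%N k =
            - (2%:R * nu%:C)^-1 *
              (U i k.+1 * (k.+1)%:R
               + \sum_(p < i.+1) \sum_(q < k.+1)
                   (i - p + 1)%N%:R * U p q * U (i - p + 1)%N (k - q)%N))
    /\ (forall i k, A i 3%N k = (k.+1)%:R * A i 1%N k.+1 / (6%:R * nu%:C))
    /\ (forall i j k, (2 <= j)%N ->
          B i j k = - ((i.+1)%:R / j%:R) * A i.+1 (j - 1)%N k)
    /\ (forall i j k, (4 <= j)%N ->
          A i j k =
            (nu%:C * j%:R * (j - 1)%N%:R)^-1 *
            (A i (j - 2)%N k.+1 * (k.+1)%:R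
             + \sum_(p < i.+1) \sum_(1 <= q < j - 2) \sum_(r < k.+1)
                 (i - p + 1)%N%:R * A p q r * A (i - p + 1)%N (j - 2 - q)%N (k - r)%N
             - \sum_(p < i.+1) \sum_(2 <= q < j - 1) \sum_(r < k.+1)
                 ((p.+1)%:R * (j - 1 - q)%N%:R / q%:R)
                   * A p.+1 (q - 1)%N r * A (i - p)%N (j - 1 - q)%N (k - r)%N)).
Proof.
pose A := @causal_fix _ 0 (coef_rule nu U A1).
have AE i j k : A i j k = coef_rule nu U A1 A i j k.
  exact: (causal_fixE _ 0 _ (@coef_rule_causal nu U A1) i j k).
exists A, (transverse_velocity A).
split; first exact/(admissibleP _ _ _ hnu).
split.
  move=> A' B' /(admissibleP _ _ _ hnu) [-> A'E].
  by rewrite (causal_fix_unique _ 0 _ (@coef_rule_causal nu U A1) _ A'E).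
split; first by [].
split; first by move=> i k; rewrite AE.
split.
  move=> i k; rewrite AE /= /reduced_convection !big1 => [|p _|p _]; rewrite ?big_geq //.
  rewrite (_ : (3 - 1 = 2)%N) // (_ : (3 - 2 = 1)%N) // addr0 subr0.
  by field; rewrite nuC_neq0 // -?natrD ?pnatr_eq0.
split; first by move=> i [|[|j]] k.
by move=> i [|[|[|[|n]]]] k // _; rewrite AE.
Qed.
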